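(* Let $c,d$ be positive integers, $\alpha,\delta\in(0,1]$, and $C_0\subseteq\mathbb{F}_2^d$ a linear code with minimum distance $d_0$, with $\delta d_0>1$. Let $\epsilon\in(0,\delta-\frac1{d_0})$ be a constant. Then for all sufficiently large $n$ and every $(c,d,\alpha,\delta)$-bipartite expander $G$ with $n$ left vertices (and any fixed orderings of the neighborhoods of right vertices), the minimum distance of the Tanner code $T(G,C_0)$ is greater than $f_\delta^{-1}\left(\frac1{d_0}+\epsilon\right)\alpha n$.
   Context: Binary linear codes; the minimum distance of a code is the least Hamming distance between two distinct codewords. A bipartite graph $G=(L\cup R,E)$ is $(c,d)$-regular if left degrees are $c$ and right degrees $d$; $N(S)$ is the neighborhood of $S$. A $(c,d,\alpha,\delta)$-bipartite expander is a $(c,d)$-regular bipartite graph with $|N(S)|\ge\delta c|S|$ for every $S\subseteq L$ with $|S|\le\alpha|L|$. Tanner code: $L=[n]$, for each $v\in R$ a fixed ordering of $N(v)$ defines $x_{N(v)}\in\mathbb{F}_2^d$ for $x\in\mathbb{F}_2^n$, and $T(G,C_0)=\{x: x_{N(v)}\in C_0\ \forall v\in R\}$. Size-Expansion Function: for $k>1$, $f_\delta(k)$ is the optimal value of the linear program in variables $\beta_i$, $i\in\mathbb{N}^+$: minimize $\frac1k\sum_{i\ge1}\beta_i$ subject to $\sum_{i\ge1}i\beta_i=k$, $\sum_{i\ge1}\left(1-(1-\frac1k)^i\right)\beta_i\ge\delta$, $\beta_i\ge0$. For $y\in(0,\delta)$, $f_\delta^{-1}(y)$ denotes the value $k>1$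 with $f_\delta(k)=y$. The parameters $c,d,\alpha,\delta,C_0,\epsilon$ are constants independent of $n$. *)

From Stdlib Require Import Reals.
From Coquelicot Require Import Coquelicot.
From mathcomp Require Import all_boot.
Local Open Scope R_scope.

Set Implicit Arguments.
Unset Strict Implicit.
Unset Printing Implicit Defensive.

Definition word (n : nat) := {ffun 'I_n -> bool}.

Definition wadd (n : nat) (x y : word n) : word n := [ffun i => xorb (x i) (y i)].
Definition wzero (n : nat) : word n := [ffun=> false].

Definition hdist (n : nat) (x y : word n) : nat := #|[set i | x i != y i]|.

Definition is_linear_code (n : nat) (C : {set word n}) : Prop :=
  wzero n \in C /\ (forall x y, x \in C -> y \in C -> wadd x y \in C).

Definition min_distance (n : nat) (C : {set word n}) (d0 : nat) : Prop :=
  (exists x y, [/\ x \in C, y \in C, x != y & hdist x y = d0]) /\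
  (forall x y, x \in C -> y \in C -> x != y -> (d0 <= hdist x y)%N).

(* A bipartite graph with left vertices L = 'I_n and right vertices R = 'I_m
   together with the fixed ordering of each right neighbourhood is given by
   nbr : 'I_m -> 'I_d -> 'I_n, where nbr v j is the j-th neighbour of v.
   The edge set is {(u,v) | u = nbr v j for some j}. *)
Definition left_nbhd (n m d : nat) (nbr : 'I_m -> 'I_d -> 'I_n) (S : {set 'I_n})
  : {set 'I_m} := [set v | [exists j, nbr v j \in S]].

Definition is_regular_bigraph (n m c d : nat) (nbr : 'I_m -> 'I_d -> 'I_n) : Prop :=
  (forall v, injective (nbr v)) /\
  (forall u : 'I_n, #|[set v | u \in codom (nbr v)]| = c).

Definition is_expander (n m c d : nat) (alpha delta : R)
  (nbr : 'I_m -> 'I_d -> 'I_n) : Prop :=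
  is_regular_bigraph c nbr /\
  (forall S : {set 'I_n}, (INR #|S| <= alpha * INR n) ->
     (delta * INR c * INR #|S| <= INR #|left_nbhd nbr S|)).

Definition tanner (n m d : nat) (nbr : 'I_m -> 'I_d -> 'I_n) (C0 : {set word d})
  : {set word n} :=
  [set x : word n | [forall v, [ffun j => x (nbr v j)] \in C0]].

(* Size-Expansion Function.  Variables beta_i, i >= 1, are encoded as
   beta : nat -> R with beta i standing for beta_{i+1}. *)
Definition lp_feasible (delta k : R) (beta : nat -> R) : Prop :=
  (forall i, 0 <= beta i) /\
  ex_series beta /\
  is_series (fun i => INR i.+1 * beta i) k /\
  ex_series (fun i => (1 - (1 - / k) ^ i.+1) * beta i) /\
  (delta <= Series (fun i => (1 - (1 - / k) ^ i.+1) * beta i)).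

Definition f_delta (delta k : R) : Rbar :=
  Glb_Rbar (fun v => exists beta, lp_feasible delta k beta /\ v = (Series beta / k)).

From HB Require Import structures.
From Stdlib Require Import Reals Lra.
From Coquelicot Require Import Coquelicot.
From mathcomp Require Import all_boot zify.

(* Let S be the support of x - y for distinct Tanner codewords, s = |S|, and
   a_v = |S ∩ N(v)| for each right vertex v.  The local views of x and y at v are
   codewords of C0, so every a_v is 0 or at least d0; since sum_v a_v = c s, this
   gives |N(S)| <= c s / d0.  If s <= alpha n, expansion of S itself contradicts
   delta d0 > 1.  If alpha n < s <= K alpha n, average the expansion inequality over
   all t-subsets T of S with t = floor(s / K) <= alpha n: v is a neighbour of a
   fraction 1 - C(s - a_v, t) / C(s, t) of them, which is at most about
   1 - (1 - 1/K)^a_v.  Hence the counts #{v | a_v = i}, rescaled and with a small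
   extra mass theta on beta_1 to absorb rounding errors, form a feasible point of the
   linear program defining f_delta(K), with objective at most (1 - theta)/d0 + theta
   < 1/d0 + eps = f_delta(K), a contradiction once s, hence n, is large. *)

Set Implicit Arguments.
Unset Strict Implicit.
Unset Printing Implicit Defensive.

Local Open Scope nat_scope.

Definition draws (T : finType) (S : {set T}) (t : nat) : {set {set T}} :=
  [set A : {set T} | A \subset S & #|A| == t].

Definition diff_set (n : nat) (x y : word n) : {set 'I_n} := [set i | x i != y i].

Lemma diff_set_eq0 (n : nat) (x y : word n) : (diff_set x y == set0) = (x == y).
Proof.
apply/eqP/eqP => [xy | ->]; last by apply/setP => i; rewrite !inE eqxx.
apply/ffunP => i; apply/eqP/negbNE.
by have := congr1 (fun A : {set 'I_n} => i \in A) xy; rewrite !inE => ->.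
Qed.

Lemma hdist_xx (n : nat) (x : word n) : hdist x x = 0.
Proof. by apply/eqP; rewrite cards_eq0 diff_set_eq0. Qed.

Section LocalSupport.

Variables (n m d : nat) (nbr : 'I_m -> 'I_d -> 'I_n).

Definition local_support (S : {set 'I_n}) (v : 'I_m) : {set 'I_n} :=
  S :&: [set u in codom (nbr v)].

Lemma card_local_support_le S v : #|local_support S v| <= d.
Proof.
rewrite -[d]card_ord -(size_codom (nbr v)).
by apply: leq_trans (card_size _); apply/subset_leq_card/subsetP => u; rewrite !inE => /andP[].
Qed.

Lemma left_nbhdE (S T : {set 'I_n}) v : T \subset S ->
  (v \in left_nbhd nbr T) = ~~ [disjoint T & local_support S v].
Proof.
move=> sTS; rewrite -setI_eq0 inE; apply/existsP/set0Pn => [[j Tj] | [u]].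
  by exists (nbr v j); rewrite !inE Tj (subsetP sTS) ?codom_f.
by rewrite !inE => /and3P[Tu _ /codomP[j eq_u]]; exists j; rewrite -eq_u.
Qed.

Lemma card_left_nbhd (S : {set 'I_n}) :
  #|left_nbhd nbr S| = \sum_v (0 < #|local_support S v|).
Proof.
rewrite -sum1_card big_mkcond; apply: eq_bigr => v _.
by rewrite (left_nbhdE _ (subxx S)) -setI_eq0 (setIidPr (subsetIl _ _)) card_gt0.
Qed.

Lemma sum_card_local_support c S : is_regular_bigraph c nbr ->
  \sum_v #|local_support S v| = c * #|S|.
Proof.
move=> [_ deg].
under eq_bigr do rewrite -sum1_card.
rewrite (exchange_big_dep (mem S)) /=; last by move=> v u _; rewrite inE => /andP[].
rewrite mulnC -sum_nat_const; apply: eq_bigr => u Su.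
by rewrite -(deg u) -sum1_card; apply: eq_bigl => v; rewrite !inE Su.
Qed.

Lemma card_draws_meeting S t v :
  #|[set T in draws S t | v \in left_nbhd nbr T]| + 'C(#|S| - #|local_support S v|, t)
  = 'C(#|S|, t).
Proof.
have sAS : local_support S v \subset S by apply: subsetIl.
rewrite -(setIidPr sAS) -cardsD -!cards_draws.
rewrite -(cardsID [set T | v \in left_nbhd nbr T] (draws S t)).
congr (_ + _); congr #|pred_of_set _|.
  by apply/setP => T; rewrite !inE andbC.
apply/setP => T; rewrite !inE subsetD andbAC.
case sTS: (T \subset S); rewrite ?andbF //=.
by have := left_nbhdE v sTS; rewrite inE => ->; rewrite negbK andbC.
Qed.

Lemma sum_card_left_nbhd_draws S t :
  \sum_(T in draws S t) #|left_nbhd nbr T|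
  = \sum_v #|[set T in draws S t | v \in left_nbhd nbr T]|.
Proof.
under eq_bigr do rewrite -sum1_card big_mkcond /=.
rewrite exchange_big /=; apply: eq_bigr => v _.
by rewrite -big_mkcondr sum1_card; apply: eq_card => T; rewrite unfold_in !inE.
Qed.

Lemma hdist_restrict (x y : word n) v : injective (nbr v) ->
  hdist [ffun j => x (nbr v j)] [ffun j => y (nbr v j)]
  = #|local_support (diff_set x y) v|.
Proof.
move=> inj_v; rewrite /hdist -(card_imset _ inj_v); apply: eq_card => u.
rewrite !inE; apply/imsetP/andP => [[j] | [xyu /codomP[j eq_u]]].
  by rewrite !inE !ffunE => xyj ->; split; last exact: codom_f.
by exists j; rewrite // !inE !ffunE -eq_u.
Qed.

Lemma tanner_local_weight_ge C0 d0 (x y : word n) v :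
  injective (nbr v) -> min_distance C0 d0 ->
  x \in tanner nbr C0 -> y \in tanner nbr C0 ->
  0 < #|local_support (diff_set x y) v| -> d0 <= #|local_support (diff_set x y) v|.
Proof.
move=> inj_v [_ dmin]; rewrite !inE => /forallP xC /forallP yC.
rewrite -hdist_restrict // => a_pos; apply: dmin => //.
by apply: contraTneq a_pos => ->; rewrite hdist_xx.
Qed.

Lemma tanner_card_left_nbhd c C0 d0 (x y : word n) :
  is_regular_bigraph c nbr -> min_distance C0 d0 ->
  x \in tanner nbr C0 -> y \in tanner nbr C0 ->
  d0 * #|left_nbhd nbr (diff_set x y)| <= c * #|diff_set x y|.
Proof.
move=> reg dmin xC yC; rewrite card_left_nbhd -(sum_card_local_support _ reg) big_distrr.
apply: leq_sum => v _; case: (boolP (0 < _)) => [a_pos | _]; last by rewrite /= muln0.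
by rewrite /= muln1; apply: tanner_local_weight_ge (reg.1 v) dmin xC yC a_pos.
Qed.

End LocalSupport.

Local Open Scope R_scope.

Lemma pow_unit_interval (x : R) (a : nat) : 0 <= x <= 1 -> 0 <= x ^ a <= 1.
Proof.
move=> x01; split; first by apply: pow_le; lra.
by rewrite -(pow1 a); apply: pow_incr; lra.
Qed.

Definition hit_prob (p : R) (a : nat) : R := 1 - (1 - p) ^ a.

Lemma hit_prob_mono (a : nat) (q r : R) : 0 <= q <= r -> r <= 1 ->
  hit_prob q a <= hit_prob r a.
Proof.
move=> qr r1; have : (1 - r) ^ a <= (1 - q) ^ a by apply: pow_incr; lra.
by rewrite /hit_prob; lra.
Qed.

Lemma hit_prob_scale (a : nat) (p lam : R) : 0 <= p -> 1 <= lam -> lam * p <= 1 ->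
  hit_prob (lam * p) a <= lam * hit_prob p a.
Proof.
move=> p0 lam1 lamp1; rewrite /hit_prob; elim: a => [|a IH] /=; first nra.
have XY : (1 - lam * p) ^ a <= (1 - p) ^ a by apply: pow_incr; split; nra.
have : lam * p * (1 - lam * p) ^ a <= lam * p * (1 - p) ^ a.
  by apply: Rmult_le_compat_l; first nra.
nra.
Qed.

Lemma hit_prob_le (a : nat) (p : R) : 0 <= p <= 1 ->
  hit_prob p a.+1 <= INR a.+1 * p * (1 - p) + p ^ 2.
Proof.
move=> p01; rewrite /hit_prob; elim: a => [|a IH]; first by rewrite /=; nra.
have -> : (1 - p) ^ a.+2 = (1 - p) * (1 - p) ^ a.+1 by [].
have : (1 - p) ^ a.+1 <= 1 - p.
  have [? ?] : 0 <= (1 - p) ^ a <= 1 by apply: pow_unit_interval; lra.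
  rewrite /=; nra.
rewrite [INR a.+2]S_INR; move: IH; set X := (1 - p) ^ a.+1; nra.
Qed.

Lemma binomial_pred_ratio (u t : nat) : (t < u)%N ->
  INR 'C(u.-1, t) = (1 - INR t / INR u) * INR 'C(u, t).
Proof.
move=> tu; have u0 : 0 < INR u by apply: lt_0_INR; apply/ltP; lia.
have := f_equal INR (mul_bin_down u t).
rewrite !mult_INR minus_INR; last by apply/leP; lia.
by move=> E; apply: (Rmult_eq_reg_l (INR u)); [rewrite E; field | ]; lra.
Qed.

Lemma binomial_sub_ge (s t d a : nat) : (a <= d)%N -> (d < s)%N -> (t + d <= s)%N ->
  INR 'C(s, t) * (1 - INR t / (INR s - INR d)) ^ a <= INR 'C(s - a, t).
Proof.
move=> ad ds tds.
have sd : INR t + INR d <= INR s by rewrite -plus_INR; apply: le_INR; apply/leP.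
have d_s : INR d < INR s by apply: lt_INR; apply/ltP.
have t0 := pos_INR t.
set q := INR t / (INR s - INR d).
have q01 : 0 <= q <= 1.
  split; first by apply: Rdiv_le_0_compat; lra.
  by apply/Rle_div_l; lra.
elim: a ad => [|a IH] ad; first by rewrite subn0 /=; lra.
have a_d : INR a.+1 <= INR d by apply: le_INR; apply/leP.
have tsa : (t < s - a)%N by lia.
have sa : INR (s - a) = INR s - INR a by rewrite minus_INR //; apply/leP; lia.
have qa : INR t / INR (s - a) <= q.
  rewrite sa; apply: Rmult_le_compat_l => //.
  by apply: Rinv_le_contravar; rewrite S_INR in a_d; lra.
have Cpos := pos_INR 'C(s - a, t).
have [Q0 _] : 0 <= (1 - q) ^ a <= 1 by apply: pow_unit_interval; lra.
rewrite subnS binomial_pred_ratio //= -Rmult_assoc (Rmult_comm _ (1 - q)) Rmult_assoc.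
apply: Rle_trans (Rmult_le_compat_l _ _ _ _ (IH (ltnW ad))) _; first lra.
by apply: Rmult_le_compat_r; lra.
Qed.

Lemma Rplus_associative : associative Rplus.
Proof. by move=> x y z; rewrite Rplus_assoc. Qed.

HB.instance Definition _ :=
  Monoid.isComLaw.Build R 0 Rplus Rplus_associative Rplus_comm Rplus_0_l.

Lemma INR_sum (I : finType) (P : pred I) (f : I -> nat) :
  INR (\sum_(i | P i) f i) = \big[Rplus/0]_(i | P i) INR (f i).
Proof. exact: (big_morph INR plus_INR). Qed.

Lemma rsum_le (I : finType) (P : pred I) (F G : I -> R) :
  (forall i, P i -> F i <= G i) ->
  \big[Rplus/0]_(i | P i) F i <= \big[Rplus/0]_(i | P i) G i.
Proof. by move=> FG; elim/big_ind2: _ => //; [lra | move=> *; lra]. Qed.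

Lemma rsum_scal (I : finType) (P : pred I) (r : R) (F : I -> R) :
  r * \big[Rplus/0]_(i | P i) F i = \big[Rplus/0]_(i | P i) (r * F i).
Proof. exact: (big_endo (Rmult r) (Rmult_plus_distr_l r) (Rmult_0_r r)). Qed.

Lemma card_mul_le_INR_sum (I : finType) (A : {set I}) (f : I -> nat) (r : R) :
  (forall i, i \in A -> r <= INR (f i)) -> INR #|A| * r <= INR (\sum_(i in A) f i).
Proof.
move=> rf; rewrite -sum1_card !INR_sum Rmult_comm rsum_scal.
by apply: rsum_le => i iA; rewrite Rmult_1_r; apply: rf.
Qed.

Section SubsetAveraging.

Variables (n m d : nat) (nbr : 'I_m -> 'I_d -> 'I_n).

Lemma card_draws_meeting_le (S : {set 'I_n}) t v :
  (d < #|S|)%N -> (t + d <= #|S|)%N ->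
  INR #|[set T in draws S t | v \in left_nbhd nbr T]|
  <= INR 'C(#|S|, t) * hit_prob (INR t / (INR #|S| - INR d)) #|local_support nbr S v|.
Proof.
move=> ds tds; have := f_equal INR (card_draws_meeting nbr S t v).
have := binomial_sub_ge (card_local_support_le nbr S v) ds tds.
by rewrite plus_INR /hit_prob => *; lra.
Qed.

Lemma expansion_le_sum_hit_prob (delta : R) c (S : {set 'I_n}) t :
  (d < #|S|)%N -> (t + d <= #|S|)%N ->
  (forall T, T \in draws S t -> delta * INR c * INR t <= INR #|left_nbhd nbr T|) ->
  delta * INR c * INR t
  <= \big[Rplus/0]_v hit_prob (INR t / (INR #|S| - INR d)) #|local_support nbr S v|.
Proof.
move=> ds tds expand.
have C0 : 0 < INR 'C(#|S|, t) by apply: lt_0_INR; apply/ltP; rewrite bin_gt0; lia.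
apply: (Rmult_le_reg_l _ _ _ C0).
have := card_mul_le_INR_sum expand.
rewrite (cards_draws S t : #|draws S t| = _) => /Rle_trans; apply.
rewrite sum_card_left_nbhd_draws INR_sum rsum_scal.
by apply: rsum_le => v _; apply: card_draws_meeting_le.
Qed.

Lemma expansion_density (delta K eta : R) c (S : {set 'I_n}) :
  1 < K -> 0 <= delta ->
  K * INR d <= INR #|S| * (K - 1) -> K + INR d <= INR #|S| * eta ->
  (forall T : {set 'I_n}, T \subset S -> INR #|T| <= INR #|S| / K ->
     delta * INR c * INR #|T| <= INR #|left_nbhd nbr T|) ->
  delta * (1 - eta) * (INR c * INR #|S|)
  <= K * \big[Rplus/0]_v hit_prob (/ K) #|local_support nbr S v|.
Proof.
move=> K1 delta0 Kd_s K_eta expand.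
have d0 := pos_INR d; have c0 := pos_INR c.
set s := INR #|S| in Kd_s K_eta expand *.
set H := \big[Rplus/0]_v _.
have s0 : 0 < s.
  have [// | s_eq0] := Rle_lt_or_eq_dec 0 s (pos_INR _).
  by move: K_eta; rewrite -s_eq0; lra.
have d_s : INR d < s by nra.
have sK : s = s / K * K by field; lra.
have [t [t_le t_gt]] := nfloor_ex (s / K) (ltac:(apply: Rdiv_le_0_compat; lra)).
have Kt_s : K * INR t <= s by nra.
have s_Kt : s < K * INR t + K by nra.
have ds : (d < #|S|)%N by apply/ltP/INR_lt.
have tds : (t + d <= #|S|)%N by apply/leP/INR_le; rewrite plus_INR -/s; nra.
have expand_t : forall T, T \in draws S t -> delta * INR c * INR t <= INR #|left_nbhd nbr T|.
  by move=> T; rewrite inE => /andP[TS /eqP Tt]; rewrite -Tt; apply: expand; rewrite ?Tt.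
have := expansion_le_sum_hit_prob ds tds expand_t; rewrite -/s.
set q := INR t / (s - INR d); set lam := s / (s - INR d).
have lamp : lam * / K = s / K / (s - INR d) by rewrite /lam; field; lra.
have q_le : q <= lam * / K.
  by rewrite lamp; apply: Rmult_le_compat_r => //; apply/Rlt_le/Rinv_0_lt_compat; lra.
have lam1 : 1 <= lam by apply/Rle_div_r; lra.
have lamp1 : lam * / K <= 1 by rewrite lamp; apply/Rle_div_l; [|apply/Rle_div_l]; lra.
have q0 : 0 <= q by apply: Rdiv_le_0_compat; [apply: pos_INR | lra].
have p0 : 0 <= / K by apply/Rlt_le/Rinv_0_lt_compat; lra.
have hits : \big[Rplus/0]_v hit_prob q #|local_support nbr S v| <= lam * H.
  rewrite /H rsum_scal; apply: rsum_le => v _.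
  exact: Rle_trans (hit_prob_mono _ (conj q0 q_le) lamp1) (hit_prob_scale _ p0 lam1 lamp1).
move=> /Rle_trans/(_ hits) tH.
have {}tH : delta * INR c * INR t * (s - INR d) <= s * H.
  have <- : lam * H * (s - INR d) = s * H by rewrite /lam; field; lra.
  by apply: Rmult_le_compat_r; lra.
have dc0 : 0 <= delta * INR c by apply: Rmult_le_pos.
have A1 : K * (delta * INR c * INR t * (s - INR d)) <= K * (s * H).
  by apply: Rmult_le_compat_l; lra.
have A2 : delta * INR c * (s - INR d) * (s - K) <= delta * INR c * (s - INR d) * (K * INR t).
  by apply: Rmult_le_compat_l; [apply: Rmult_le_pos | ]; lra.
have A3 : delta * INR c * (s * (K + INR d)) <= delta * INR c * (s * (s * eta)).
  by apply: Rmult_le_compat_l => //; apply: Rmult_le_compat_l; lra.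
have A4 : 0 <= delta * INR c * (K * INR d) by apply: Rmult_le_pos => //; nra.
apply: (Rmult_le_reg_r s) => //; nra.
Qed.

End SubsetAveraging.

Lemma sum_n_big (f : nat -> R) (N : nat) : sum_n f N = \big[Rplus/0]_(i < N.+1) f i.
Proof.
elim: N => [|N IH]; first by rewrite sum_O big_ord_recr big_ord0 /=; ring.
by rewrite sum_Sn IH [in RHS]big_ord_recr.
Qed.

Lemma is_series_finite_support (f : nat -> R) (D : nat) :
  (forall i, (D <= i)%N -> f i = 0) -> is_series f (\big[Rplus/0]_(i < D) f i).
Proof.
move=> f0; apply: (filterlim_ext_loc (fun _ => \big[Rplus/0]_(i < D) f i)); last first.
  exact: filterlim_const.
exists D => N DN; rewrite sum_n_big -!(big_mkord xpredT f).
rewrite [RHS](@big_cat_nat _ _ _ D) //=; last by apply/leP; lia.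
rewrite [X in _ = _ + X]big1_seq ?Rplus_0_r // => i /andP[_].
by rewrite mem_index_iota => /andP[Di _]; apply: f0.
Qed.

(* Indexed as the variables of [lp_feasible]: [profile a i] plays beta_(i+1). *)
Definition profile (m : nat) (a : 'I_m -> nat) (i : nat) : R := INR #|[set v | a v == i.+1]|.

Lemma profile_eq0 (m D : nat) (a : 'I_m -> nat) (i : nat) :
  (forall v, (a v <= D)%N) -> (D <= i)%N -> profile a i = 0.
Proof.
move=> aD Di; rewrite /profile (_ : [set v | a v == i.+1] = set0) ?cards0 //.
by apply/setP => v; rewrite !inE; apply/negbTE; have := aD v; lia.
Qed.

Lemma profileE (m : nat) (a : 'I_m -> nat) (i : nat) :
  profile a i = \big[Rplus/0]_v (if a v == i.+1 then 1 else 0).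
Proof.
rewrite /profile -sum1_card INR_sum big_mkcond /=.
by apply: eq_bigr => v _; rewrite inE.
Qed.

Lemma sum_profile (m D : nat) (a : 'I_m -> nat) (W : nat -> R) :
  W 0%N = 0 -> (forall v, (a v <= D)%N) ->
  \big[Rplus/0]_(i < D) (W i.+1 * profile a i) = \big[Rplus/0]_v W (a v).
Proof.
move=> W0 aD.
transitivity (\big[Rplus/0]_(i < D) \big[Rplus/0]_v (if a v == i.+1 then W (a v) else 0)).
  apply: eq_bigr => i _; rewrite profileE rsum_scal; apply: eq_bigr => v _.
  by case: eqP => [-> | _]; ring.
rewrite exchange_big /=; apply: eq_bigr => v _.
case av: (a v) => [|k]; first by rewrite W0; apply: big1 => i _.
have kD : (k < D)%N by rewrite -av.
by rewrite -big_mkcond (big_pred1 (Ordinal kD)).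
Qed.

Definition lp_point (m : nat) (a : 'I_m -> nat) (A B : R) (i : nat) : R :=
  A * profile a i + (if i == 0%N then B else 0).

Lemma is_series_lp_point (m D : nat) (a : 'I_m -> nat) (A B : R) (W : nat -> R) :
  W 0%N = 0 -> (0 < D)%N -> (forall v, (a v <= D)%N) ->
  is_series (fun i => W i.+1 * lp_point a A B i)
    (A * \big[Rplus/0]_v W (a v) + W 1%N * B).
Proof.
move=> W0 D0 aD.
have -> : A * \big[Rplus/0]_v W (a v) + W 1%N * B
    = \big[Rplus/0]_(i < D) (W i.+1 * lp_point a A B i).
  transitivity (\big[Rplus/0]_(i < D)
    (A * (W i.+1 * profile a i) + (if i == 0%N :> nat then W 1%N * B else 0))); last first.
    by apply: eq_bigr => i _; rewrite /lp_point; case: eqP => [-> | _]; ring.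
  rewrite big_split /= -rsum_scal (sum_profile W0 aD); congr (_ + _).
  by case: D D0 {aD} => // D _; rewrite big_ord_recl big1 /=; [ring | ].
apply: is_series_finite_support => i Di.
by rewrite /lp_point (profile_eq0 aD Di) ifN; [ring | apply/eqP; lia].
Qed.

Lemma is_series_lp_point_total (m D : nat) (a : 'I_m -> nat) (A B : R) :
  (0 < D)%N -> (forall v, (a v <= D)%N) ->
  is_series (lp_point a A B) (A * INR (\sum_v (0 < a v)%N) + B).
Proof.
move=> D0 aD.
have := @is_series_lp_point m D a A B (fun k => INR (0 < k)%N) erefl D0 aD.
by rewrite INR_sum /= Rmult_1_l; apply: is_series_ext => i; rewrite Rmult_1_l.
Qed.

Lemma lp_point_feasible (delta K A B : R) (m D : nat) (a : 'I_m -> nat) :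
  0 <= A -> 0 <= B -> (0 < D)%N -> (forall v, (a v <= D)%N) ->
  A * \big[Rplus/0]_v INR (a v) + B = K ->
  delta <= A * \big[Rplus/0]_v hit_prob (/ K) (a v) + B / K ->
  lp_feasible delta K (lp_point a A B).
Proof.
move=> A0 B0 D0 aD sizeK hitK.
have hitS : is_series (fun i => (1 - (1 - / K) ^ i.+1) * lp_point a A B i)
    (A * \big[Rplus/0]_v hit_prob (/ K) (a v) + B / K).
  rewrite (_ : B / K = hit_prob (/ K) 1 * B); last by rewrite /hit_prob /Rdiv /=; ring.
  apply: (@is_series_lp_point m D a A B (hit_prob (/ K))) D0 aD.
  by rewrite /hit_prob /=; ring.
split; [|split; [|split; [|split]]].
- move=> i; have := pos_INR #|[set v | a v == i.+1]|.
  by rewrite /lp_point /profile => card0; case: (i == 0%N); nra.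
- by eexists; apply: is_series_lp_point_total D0 aD.
- have := @is_series_lp_point m D a A B INR erefl D0 aD.
  by rewrite /= Rmult_1_l sizeK.
- by eexists; apply: hitS.
- by rewrite (is_series_unique _ _ hitS).
Qed.

Lemma f_delta_le_Series (delta K : R) (beta : nat -> R) :
  lp_feasible delta K beta -> Rbar_le (f_delta delta K) (Series beta / K).
Proof. by move=> feas; apply: (Glb_Rbar_correct _).1; exists beta. Qed.

Lemma lp_objective_ge (delta K : R) (beta : nat -> R) :
  1 < K -> lp_feasible delta K beta -> 1 - K * (1 - delta) <= Series beta / K.
Proof.
move=> K1 [beta0 [[S betaS] [sizeK [_ hitK]]]].
set p := / K; have pK : p * K = 1 by rewrite /p; field; lra.
have p01 : 0 < p < 1.
  split; first by apply: Rinv_0_lt_compat; lra.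
  by rewrite /p -Rinv_1; apply: Rinv_lt_contravar; lra.
set ub := fun i => p * (1 - p) * (INR i.+1 * beta i) + p ^ 2 * beta i.
have ubS : is_series ub (p * (1 - p) * K + p ^ 2 * S).
  exact: is_series_plus (is_series_scal_l _ _ _ sizeK) (is_series_scal_l _ _ _ betaS).
have hit_ub : Series (fun i => (1 - (1 - / K) ^ i.+1) * beta i) <= Series ub.
  apply: Series_le; last by exists (p * (1 - p) * K + p ^ 2 * S).
  move=> i; have := hit_prob_le i (conj (Rlt_le _ _ p01.1) (Rlt_le _ _ p01.2)).
  have [X0 X1] : 0 <= (1 - p) ^ i.+1 <= 1 by apply: pow_unit_interval; lra.
  by have := beta0 i; rewrite /ub /hit_prob -/p => b0 hb; split; nra.
rewrite (is_series_unique _ _ ubS) in hit_ub.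
rewrite (is_series_unique _ _ betaS) /Rdiv -/p.
have E1 : p * (1 - p) * K = 1 - p.
  by transitivity ((1 - p) * (p * K)); [ring | rewrite pK; ring].
have E2 : p * (1 - K * (1 - delta)) = p - (1 - delta).
  by transitivity (p - (p * K) * (1 - delta)); [ring | rewrite pK; ring].
by apply: (Rmult_le_reg_l p); [lra | rewrite E2; nra].
Qed.

Lemma f_delta_ge_objective_bound (delta K : R) :
  1 < K -> Rbar_le (1 - K * (1 - delta)) (f_delta delta K).
Proof.
move=> K1; apply: (Glb_Rbar_correct _).2 => _ [beta [feas ->]].
exact: lp_objective_ge feas.
Qed.

Lemma f_delta_le_profile (delta K theta : R) (m D w : nat) (a : 'I_m -> nat) :
  1 < K -> 0 <= theta <= 1 -> 0 <= delta <= 1 -> (0 < D)%N -> (forall v, (a v <= D)%N) ->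
  \sum_v a v = w -> (0 < w)%N ->
  delta * (1 - theta * (1 - delta)) * INR w
    <= K * \big[Rplus/0]_v hit_prob (/ K) (a v) ->
  Rbar_le (f_delta delta K) ((1 - theta) * INR (\sum_v (0 < a v)%N) / INR w + theta).
Proof.
move=> K1 theta01 delta01 D0 aD sum_a w0 density.
have w_pos : 0 < INR w by apply: lt_0_INR; apply/ltP.
set H := \big[Rplus/0]_v _ in density.
set A := (1 - theta) * K / INR w.
have A0 : 0 <= A by apply: Rdiv_le_0_compat; nra.
have AH : (1 - theta) * (delta * (1 - theta * (1 - delta))) <= A * H.
  rewrite /A (_ : _ * H = (1 - theta) * (K * H / INR w)); last by field; lra.
  apply: Rmult_le_compat_l; first lra.
  by apply/(Rle_div_r _ _ _ w_pos); lra.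
(* The mass theta K on beta_1 contributes exactly theta to the expansion
   constraint, compensating the factor 1 - theta (1 - delta) lost in [density]. *)
have feas : lp_feasible delta K (lp_point a A (theta * K)).
  apply: (lp_point_feasible A0 _ D0 aD); first nra.
    by rewrite -INR_sum sum_a /A; field; lra.
  rewrite (_ : theta * K / K = theta); last by field; lra.
  have : 0 <= theta * (1 - delta) * (1 - (1 - theta) * delta) by apply: Rmult_le_pos; nra.
  rewrite -/H (_ : theta * (1 - delta) * (1 - (1 - theta) * delta)
    = (1 - theta) * (delta * (1 - theta * (1 - delta))) + theta - delta); first lra.
  ring.
have := f_delta_le_Series feas.
rewrite (is_series_unique _ _ (is_series_lp_point_total D0 aD)).
rewrite (_ : _ / K = (1 - theta) * INR (\sum_v (0 < a v)%N) / INR w + theta) //.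
by rewrite /A; field; lra.
Qed.

Definition support_threshold (K eta : R) (d : nat) : R :=
  K * INR d / (K - 1) + (K + INR d) / eta.

Lemma above_support_threshold (K eta s : R) (d : nat) :
  1 < K -> 0 < eta -> support_threshold K eta d < s ->
  K * INR d <= s * (K - 1) /\ K + INR d <= s * eta.
Proof.
move=> K1 eta0; have d0 := pos_INR d.
have M1 : 0 <= K * INR d / (K - 1) by apply: Rdiv_le_0_compat; nra.
have M2 : 0 <= (K + INR d) / eta by apply: Rdiv_le_0_compat; lra.
by rewrite /support_threshold => s_gt; split; apply/Rle_div_l; lra.
Qed.

Section TannerDistance.

Variables (n m c d : nat) (alpha delta : R) (nbr : 'I_m -> 'I_d -> 'I_n).
Variables (C0 : {set word d}) (d0 : nat) (x y : word n).
Hypotheses (expander : is_expander c alpha delta nbr) (dmin : min_distance C0 d0).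
Hypotheses (xC : x \in tanner nbr C0) (yC : y \in tanner nbr C0) (xy : x != y).
Hypothesis c_gt0 : (0 < c)%N.

Lemma card_diff_set_gt0 : (0 < #|diff_set x y|)%N.
Proof. by rewrite card_gt0 diff_set_eq0. Qed.

Lemma INR_tanner_card_left_nbhd :
  INR d0 * INR #|left_nbhd nbr (diff_set x y)| <= INR c * INR #|diff_set x y|.
Proof.
by rewrite -!mult_INR; apply/le_INR/leP/(tanner_card_left_nbhd expander.1 dmin xC yC).
Qed.

Lemma tanner_support_gt : 1 < delta * INR d0 -> alpha * INR n < INR #|diff_set x y|.
Proof.
move=> delta_d0; apply: Rnot_le_lt => small.
have c0 : 0 < INR c by apply/lt_0_INR/ltP.
have s0 : 0 < INR #|diff_set x y| by apply/lt_0_INR/ltP/card_diff_set_gt0.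
have := Rmult_le_compat_l _ _ _ (pos_INR d0) (expander.2 _ small).
have := INR_tanner_card_left_nbhd.
have : 0 < INR c * INR #|diff_set x y| by apply: Rmult_lt_0_compat.
nra.
Qed.

Lemma tanner_f_delta_le (K theta : R) :
  (0 < d)%N -> 0 < INR d0 -> 1 < K -> 0 < theta <= 1 -> 0 <= delta < 1 ->
  support_threshold K (theta * (1 - delta)) d < INR #|diff_set x y| ->
  INR #|diff_set x y| <= K * alpha * INR n ->
  Rbar_le (f_delta delta K) ((1 - theta) / INR d0 + theta).
Proof.
move=> d_gt0 d0_gt0 K1 theta01 delta01 s_big s_le.
have eta0 : 0 < theta * (1 - delta) by apply: Rmult_lt_0_compat; lra.
have [Kd K_eta] := above_support_threshold K1 eta0 s_big.
have {}theta01 : 0 <= theta <= 1 by lra.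
have {}delta01 : 0 <= delta <= 1 by lra.
have [reg expand] := expander; set S := diff_set x y in Kd K_eta s_le *.
have c0 : 0 < INR c by apply/lt_0_INR/ltP.
have s0 : 0 < INR #|S| by apply/lt_0_INR/ltP/card_diff_set_gt0.
have density := expansion_density (c := c) K1 (proj1 delta01) Kd K_eta.
have := f_delta_le_profile K1 theta01 delta01 d_gt0 (card_local_support_le nbr S)
  (sum_card_local_support S reg).
rewrite muln_gt0 c_gt0 card_diff_set_gt0 mult_INR => /(_ erefl).
have expand_small : forall T : {set 'I_n}, T \subset S -> INR #|T| <= INR #|S| / K ->
    delta * INR c * INR #|T| <= INR #|left_nbhd nbr T|.
  move=> T _ T_le; apply: expand; apply: Rle_trans T_le _.
  by apply/Rle_div_l; nra.
move=> /(_ (density _ nbr expand_small)) /Rbar_le_trans; apply; rewrite /= -card_left_nbhd.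
have := INR_tanner_card_left_nbhd; rewrite -/S => d0N.
have ratio : INR #|left_nbhd nbr S| / (INR c * INR #|S|) <= 1 / INR d0.
  apply/Rle_div_l; first nra.
  rewrite (_ : 1 / INR d0 * _ = INR c * INR #|S| / INR d0); last by field; lra.
  by apply/Rle_div_r => //; lra.
rewrite /Rdiv Rmult_assoc -/(Rdiv _ _).
rewrite (_ : (1 - theta) * / INR d0 = (1 - theta) * (1 / INR d0)).
  by apply: Rplus_le_compat_r; apply: Rmult_le_compat_l ratio; lra.
by rewrite /Rdiv; ring.
Qed.

End TannerDistance.

Theorem theorem5p6 (c d : nat) (alpha delta : R) (C0 : {set word d}) (d0 : nat)
  (eps : R) :
  (0 < c)%N -> (0 < d)%N ->
  (0 < alpha) -> (alpha <= 1) -> (0 < delta) -> (delta <= 1) ->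
  is_linear_code C0 -> min_distance C0 d0 ->
  (1 < delta * INR d0) ->
  (0 < eps) -> (eps < delta - 1 / INR d0) ->
  forall K : R, (1 < K) -> f_delta delta K = Rbar.Finite (1 / INR d0 + eps) ->
  exists N : nat, forall n : nat, (N <= n)%N ->
    forall (m : nat) (nbr : 'I_m -> 'I_d -> 'I_n),
      is_expander c alpha delta nbr ->
      forall x y : word n, x \in tanner nbr C0 -> y \in tanner nbr C0 -> x != y ->
        (K * alpha * INR n < INR (hdist x y)).
Proof.
move=> c_gt0 d_gt0 alpha_gt0 _ delta_gt0 delta_le1 _ dmin delta_d0 eps_gt0 eps_lt K K1 fK.
have d0_gt1 : 1 < INR d0 by nra.
have inv_d0 : 0 < 1 / INR d0 by apply: Rdiv_lt_0_compat; lra.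
(* For delta = 1 the hypotheses are inconsistent, as f_1(K) >= 1 > 1/d0 + eps. *)
have [delta_lt1 | delta1] := Rle_lt_or_eq_dec _ _ delta_le1; last first.
  by have := f_delta_ge_objective_bound delta K1; rewrite fK delta1 /=; lra.
set theta := eps / 2; have theta01 : 0 < theta <= 1 by rewrite /theta; lra.
have [N MN] := INR_archimed alpha (support_threshold K (theta * (1 - delta)) d) alpha_gt0.
exists N => n Nn m nbr expander x y xC yC xy; apply: Rnot_le_lt => s_le.
change (INR #|diff_set x y| <= K * alpha * INR n) in s_le.
have s_gt := tanner_support_gt expander dmin xC yC xy c_gt0 delta_d0.
have s_big : support_threshold K (theta * (1 - delta)) d < INR #|diff_set x y|.
  by have := le_INR _ _ (elimT leP Nn); nra.
have := tanner_f_delta_le expander dmin xC yC xy c_gt0 d_gt0 (ltac:(lra)) K1 theta01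
  (conj (Rlt_le _ _ delta_gt0) delta_lt1) s_big s_le.
have -> : (1 - theta) / INR d0 = 1 / INR d0 - theta / INR d0 by field; lra.
have : 0 < theta / INR d0 by apply: Rdiv_lt_0_compat; lra.
by rewrite fK /theta /=; lra.
Qed.
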